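(* Let $G$ be a graph on $n$ vertices, $t\ge 1$ an integer, and let $G'$, $\alpha$, $\beta$ be as in the construction below, with $k=n+t+1$ and $\ell=2t+2t^2$. If $\mathcal{C}_k(G')$ contains a path from $\alpha$ to $\beta$ of length at most $\ell$, then $G$ has an independent set of size at least $t-1$.
   Context: Construction: with $V(G)=\{v_1,\ldots,v_n\}$, $V(G')=V_G\cup V_B\cup V_C$, where $V_G=\{g_1,\ldots,g_n\}$ induces a copy of $G$ ($g_ig_j$ an edge iff $v_iv_j\in E(G)$); $V_B=\{b^i_j\mid i,j\in\{1,\ldots,t\}\}$ with $b^i_jb^{i'}_{j'}$ an edge iff $i\ne i'$ and $j\ne j'$; all edges between $V_G$ and $V_B$ are present; $V_C=C_1\cup\cdots\cup C_{n+t+1}$ with the $C_i$ pairwise disjoint independent sets of size $2t+2t^2$ and no edges among vertices of $V_C$; each $g_i$ is adjacent to all of $V_C\setminus(C_i\cup C_{n+t+1})$; each vertex of $V_B$ is adjacent to all of $C_{n+t+1}$; no other edges. $\alpha(g_i)=i$, $\alpha(c)=i$ for $c\in C_i$, $\alpha(b^i_j)=n+i$; $\beta(v)=\alpha(v)$ for $v\in V_G\cup V_C$ and $\beta(b^i_j)=n+j$. A $k$-coloring is a map $V\to\{1,\ldots,k\}$ with adjacent vertices colored differently; $\mathcal{C}_k(G')$ is the graph on the $k$-colorings of $G'$, two adjacent iff they differ on exactly one vertex. *)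

From mathcomp Require Import all_boot.
Set Implicit Arguments. Unset Strict Implicit. Unset Printing Implicit Defensive.

(* Vertices of G' (0-based indices):
   inl (inl i)        = g_{i+1}                 (i : 'I_n)
   inl (inr (i, j))   = b^{i+1}_{j+1}           (i j : 'I_t)
   inr (m, x)         = the x-th element of C_{m+1}  (m : 'I_(n+t+1), x : 'I_(2t+2t^2)) *)
Definition vertG' (n t : nat) : finType :=
  (('I_n + ('I_t * 'I_t)) + ('I_(n + t + 1) * 'I_(2 * t + 2 * t ^ 2)))%type.

Definition adjG' (n t : nat) (e : rel 'I_n) (u v : vertG' n t) : bool :=
  match u, v with
  | inl (inl i), inl (inl j) => e i j
  | inl (inr (i, j)), inl (inr (i', j')) => (i != i') && (j != j')
  | inl (inl _), inl (inr _) | inl (inr _), inl (inl _) => true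
  | inl (inl i), inr (m, _) | inr (m, _), inl (inl i) =>
      (val m != val i) && (val m != n + t)
  | inl (inr _), inr (m, _) | inr (m, _), inl (inr _) => val m == n + t
  | inr _, inr _ => false
  end.

(* k-colorings with k = n+t+1 (type 'I_(n+t).+1); colors {1..k} encoded as 'I_k = {0..k-1} (color c <-> c-1). *)
Definition coloring (n t : nat) := {ffun vertG' n t -> 'I_(n + t).+1}.

Definition proper (n t : nat) (e : rel 'I_n) (f : coloring n t) : bool :=
  [forall u, forall v, adjG' e u v ==> (f u != f v)].

Definition recolor_adj (n t : nat) (f g : coloring n t) : bool :=
  #|[set v | f v != g v]| == 1.

Definition alpha (n t : nat) : coloring n t :=
  [ffun v => match v with
             | inl (inl i) => @inord (n + t) (val i)
             | inl (inr (i, _)) => @inord (n + t) (n + val i)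
             | inr (m, _) => @inord (n + t) (val m)
             end].

Definition beta (n t : nat) : coloring n t :=
  [ffun v => match v with
             | inl (inl i) => @inord (n + t) (val i)
             | inl (inr (_, j)) => @inord (n + t) (n + val j)
             | inr (m, _) => @inord (n + t) (val m)
             end].

(* a walk alpha = f_0, f_1, ..., f_L = beta in C_k(G') with L edges (s = [f_1;...;f_L]) *)
Definition reconf_path (n t : nat) (e : rel 'I_n) (s : seq (coloring n t)) : bool :=
  [&& all (proper e) (alpha n t :: s),
      path (@recolor_adj n t) (alpha n t) s &
      last (alpha n t) s == beta n t].

Definition independent (n : nat) (e : rel 'I_n) (S : {set 'I_n}) : bool :=
  [forall x in S, forall y in S, ~~ e x y].

From Pilot Require Import Defs.
From mathcomp Require Import all_boot zify.
Set Implicit Arguments. Unset Strict Implicit. Unset Printing Implicit Defensive.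

(* A walk of length at most l changes at most l vertices; one of them is b^1_2 (its colour
   differs in alpha and beta), so each class C_m, of size l, keeps a vertex of colour m all
   along the walk.  Hence in every colouring f of the walk, each g_i has colour i or the top
   colour k, the grid B avoids k, and B uses a colour i < n only if g_i has colour k.  So B
   uses at most t + |S_f| colours, where S_f = {i | f g_i = k} is independent.
   In alpha every row of B repeats a colour, in beta none does; at the first colouring of the
   walk with a non-repeating row, at least t - 1 rows still repeat.  In B a colour repeated
   in a row lies only in that row and one repeated in a column only in that column, which
   forces at least 2t - 1 colours on B.  Thus |S_f| >= t - 1. *)

Lemma card_disjoint_leq (T : finType) (A B X : {set T}) :
  A \subset X -> B \subset X -> [disjoint A & B] -> #|A| + #|B| <= #|X|.
Proof.
move=> sAX sBX dAB; rewrite -cardsUI (disjoint_setI0 dAB) cards0 addn0.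
by apply: subset_leq_card; rewrite subUset sAX.
Qed.

Section Grid.

Variables (t : nat) (K : finType).
Implicit Types (h : 'I_t -> 'I_t -> K) (r c : 'I_t).

Definition grid_proper h := forall r r' c c', r != r' -> c != c' -> h r c != h r' c'.
Definition grid_tr h : 'I_t -> 'I_t -> K := fun c r => h r c.
Definition grid_colors h : {set K} := [set h r c | r : 'I_t, c : 'I_t].
Definition row_repeats h r := [exists c1, exists c2, (c1 != c2) && (h r c1 == h r c2)].

Lemma grid_proper_tr h : grid_proper h -> grid_proper (grid_tr h).
Proof. by move=> hP c c' r r' nc nr; apply: hP. Qed.

Lemma grid_colors_tr h : grid_colors (grid_tr h) = grid_colors h.
Proof.
by apply/setP => x; apply/imset2P/imset2P => -[a b _ _ ->]; exists b a.
Qed.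

Lemma eq_row_repeats h h' r : h r =1 h' r -> row_repeats h r = row_repeats h' r.
Proof. by move=> E; apply: eq_existsb => c1; apply: eq_existsb => c2; rewrite !E. Qed.

Lemma row_repeatsPn h r : reflect (injective (h r)) (~~ row_repeats h r).
Proof.
apply: (iffP idP) => [/existsPn hr c1 c2 E | inj_hr].
  by apply/eqP; apply: contraT => nc; have /existsPn/(_ c2) := hr c1; rewrite nc E eqxx.
by apply/existsPn => c1; apply/existsPn => c2; apply/negP => /andP[/eqP nc /eqP/inj_hr].
Qed.

Lemma repeated_color_in_row h r r' c1 c2 d : grid_proper h ->
  c1 != c2 -> h r c1 = h r c2 -> h r' d = h r c1 -> r' = r.
Proof.
move=> hP nc12 E12 E; apply/eqP; apply: contraT => nr.
have d_eq c : h r' d = h r c -> d = c.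
  by move=> Ec; apply/eqP; apply: contraT => nd; have := hP _ _ _ _ nr nd; rewrite Ec eqxx.
by case/negP: nc12; rewrite -(d_eq c1 E) (d_eq c2) // E E12.
Qed.

Definition rep_col h r : 'I_t :=
  odflt r [pick c1 | [exists c2, (c1 != c2) && (h r c1 == h r c2)]].
Definition rep_color h r : K := h r (rep_col h r).

Lemma rep_colP h r : row_repeats h r ->
  exists2 c2, rep_col h r != c2 & h r (rep_col h r) = h r c2.
Proof.
rewrite /rep_col; case: pickP => [c1 /existsP[c2 /andP[nc /eqP E]] _ | none].
  by exists c2.
by case/existsP=> c1 /existsP[c2 hc]; have /existsPn/(_ c2) := negbT (none c1); rewrite hc.
Qed.

Lemma rep_color_inj h : grid_proper h ->
  {in [set r | row_repeats h r] &, injective (rep_color h)}.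
Proof.
move=> hP r r'; rewrite !inE => /rep_colP[c nc E] _ Er.
exact/esym/(repeated_color_in_row (d := rep_col h r') hP nc E (esym Er)).
Qed.

Lemma rep_colors_disjoint h r c : grid_proper h ->
  row_repeats h r -> row_repeats (grid_tr h) c -> rep_color h r != rep_color (grid_tr h) c.
Proof.
move=> hP /rep_colP[c' nc E] /rep_colP[r' nr E'].
apply/eqP => Erc; case/negP: nr.
rewrite (repeated_color_in_row hP nc E (esym Erc)).
rewrite (repeated_color_in_row (r' := r') (d := c) hP nc E) // -[h r' c]E'.
exact: esym Erc.
Qed.

Lemma repeating_rows_cols_leq h : grid_proper h ->
  #|[set r | row_repeats h r]| + #|[set c | row_repeats (grid_tr h) c]| <= #|grid_colors h|.
Proof.
move=> hP; rewrite -(card_in_imset (rep_color_inj hP)).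
rewrite -(card_in_imset (rep_color_inj (grid_proper_tr hP))).
apply: card_disjoint_leq.
- by apply/subsetP => _ /imsetP[r _ ->]; apply/imset2P; exists r (rep_col h r).
- apply/subsetP => _ /imsetP[c _ ->]; rewrite -grid_colors_tr.
  by apply/imset2P; exists c (rep_col (grid_tr h) c).
rewrite disjoint_subset; apply/subsetP => _ /imsetP[r hr ->]; apply/imsetP => -[c hc E].
rewrite !inE in hr hc.
by move: (rep_colors_disjoint hP hr hc); rewrite E eqxx.
Qed.

Lemma injective_row_col_leq h r0 c0 : grid_proper h ->
  ~~ row_repeats h r0 -> ~~ row_repeats (grid_tr h) c0 -> t + (t - 1) <= #|grid_colors h|.
Proof.
move=> hP /row_repeatsPn inj_row /row_repeatsPn inj_col.
have -> : t - 1 = #|[set h r c0 | r in [set~ r0]]|.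
  by rewrite card_in_imset ?cardsC1 ?card_ord ?subn1 // => r r' _ _; apply: inj_col.
have {1}-> : t = #|[set h r0 c | c : 'I_t]| by rewrite card_imset // card_ord.
apply: card_disjoint_leq.
- by apply/subsetP => _ /imsetP[c _ ->]; apply/imset2P; exists r0 c.
- by apply/subsetP => _ /imsetP[r _ ->]; apply/imset2P; exists r c0.
rewrite disjoint_subset; apply/subsetP => _ /imsetP[c _ ->]; apply/imsetP => -[r].
rewrite !inE => nr E.
have [ec | nc] := eqVneq c c0.
  by move: nr; rewrite ec in E; rewrite (inj_col _ _ (esym E)) eqxx.
by have := hP r0 r c c0; rewrite eq_sym nr nc E eqxx => /(_ isT isT).
Qed.

Lemma grid_colors_lower_bound h : grid_proper h ->
  ~~ [forall r, row_repeats h r] -> t - 1 <= #|[set r | row_repeats h r]| ->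
  t + (t - 1) <= #|grid_colors h|.
Proof.
move=> hP /forallPn[r0 hr0] many_rows.
have [/forallP all_cols | /forallPn[c0 hc0]] := boolP [forall c, row_repeats (grid_tr h) c].
  apply: leq_trans (repeating_rows_cols_leq hP).
  have -> : [set c | row_repeats (grid_tr h) c] = setT.
    by apply/setP => c; rewrite !inE all_cols.
  by rewrite cardsT card_ord addnC leq_add2r.
exact: injective_row_col_leq hP hr0 hc0.
Qed.

End Grid.

Section Walks.

Variables (aT : finType) (rT : eqType).
Implicit Types (f : {ffun aT -> rT}) (s : seq {ffun aT -> rT}).

Fixpoint changed f0 s : {set aT} :=
  if s is f1 :: s' then [set v | f0 v != f1 v] :|: changed f1 s' else set0.

Lemma card_changed f0 s :
  path (fun f g => #|[set v | f v != g v]| == 1) f0 s -> #|changed f0 s| <= size s.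
Proof.
elim: s f0 => [|f1 s IHs] f0 /=; first by rewrite cards0.
case/andP=> /eqP step walk; rewrite cardsU step.
by apply: leq_trans (leq_subr _ _) _; rewrite add1n ltnS IHs.
Qed.

Lemma changed_fixed f0 s v :
  v \notin changed f0 s -> {in f0 :: s, forall f, f v = f0 v}.
Proof.
elim: s f0 => [|f1 s IHs] f0 /=; first by move=> _ f; rewrite inE => /eqP->.
rewrite !inE negb_or negbK => /andP[/eqP f01 hv] f; rewrite inE => /predU1P[-> // | fs].
by rewrite f01 (IHs f1 hv f fs).
Qed.

End Walks.

Lemma path_exit (T : eqType) (R : rel T) (P Q : pred T) x0 s :
  (forall x y, R x y -> P x -> Q y) -> P x0 -> ~~ P (last x0 s) -> path R x0 s ->
  exists2 y, y \in s & ~~ P y && Q y.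
Proof.
move=> RPQ; elim: s x0 => [|y s IHs] x0 Px0 /=; first by rewrite Px0.
move=> end_s /andP[Rx0y walk]; have [Py | nPy] := boolP (P y).
  by have [z zs hz] := IHs y Py end_s walk; exists z; rewrite // inE zs orbT.
by exists y; rewrite ?mem_head // nPy (RPQ _ _ Rx0y Px0).
Qed.

Section Construction.

Variables (n t : nat) (e : rel 'I_n).
Local Notation V := (vertG' n t).
Local Notation col := (coloring n t).
Local Notation ell := (2 * t + 2 * t ^ 2).

Definition gvert (i : 'I_n) : V := inl (inl i).
Definition bvert (r c : 'I_t) : V := inl (inr (r, c)).
Definition cvert (m : 'I_(n + t + 1)) (x : 'I_ell) : V := inr (m, x).
Definition bgrid (f : col) : 'I_t -> 'I_t -> 'I_(n + t).+1 := fun r c => f (bvert r c).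
Definition top_class (f : col) : {set 'I_n} := [set i | f (gvert i) == ord_max].

Lemma proper_adj (f : col) u v : Defs.proper e f -> adjG' e u v -> f u != f v.
Proof. by move=> /forallP/(_ u)/forallP/(_ v)/implyP. Qed.

Lemma bgrid_proper f : Defs.proper e f -> grid_proper (bgrid f).
Proof. by move=> fP r r' c c' nr nc; apply: proper_adj fP _; rewrite /= nr nc. Qed.

Lemma top_class_independent f : Defs.proper e f -> independent e (top_class f).
Proof.
move=> fP; apply/forallP => i; apply/implyP; rewrite inE => /eqP fi.
apply/forallP => j; apply/implyP; rewrite inE => /eqP fj; apply/negP => eij.
by have := proper_adj (u := gvert i) (v := gvert j) fP eij; rewrite fi fj eqxx.
Qed.

Section ClassesColored.

Variable f : col.
Hypothesis f_proper : Defs.proper e f.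
Hypothesis f_classes : forall m, exists x, f (cvert m x) = inord m.

Definition class_of (k : 'I_(n + t).+1) : 'I_(n + t + 1) := cast_ord (esym (addn1 _)) k.

Lemma color_on_class k : exists x, f (cvert (class_of k) x) = k.
Proof. by have [x fx] := f_classes (class_of k); exists x; rewrite fx inord_val. Qed.

Lemma gvert_color i : val (f (gvert i)) = i \/ f (gvert i) = ord_max.
Proof.
set k := f (gvert i); have [-> | ni] := eqVneq (val k) i; first by left.
have [-> | nmax] := eqVneq k ord_max; first by right.
have [x fx] := color_on_class k.
have := proper_adj (u := gvert i) (v := cvert (class_of k) x) f_proper.
by rewrite /= fx eqxx ni -val_eqE /= in nmax *; move/(_ nmax).
Qed.

Lemma bvert_color_neq_max r c : f (bvert r c) != ord_max.
Proof.
apply/eqP => fmax; have [x fx] := color_on_class ord_max.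
have := proper_adj (u := bvert r c) (v := cvert (class_of ord_max) x) f_proper.
by rewrite /= eqxx fx fmax eqxx => /(_ isT).
Qed.

Lemma bvert_color_low r c (i : 'I_n) : val (f (bvert r c)) = i -> i \in top_class f.
Proof.
move=> fi; rewrite inE; case: (gvert_color i) => [gi | -> //].
have same : f (gvert i) = f (bvert r c) by apply: val_inj; rewrite gi fi.
have := proper_adj (u := gvert i) (v := bvert r c) f_proper.
by rewrite same eqxx => /(_ isT).
Qed.

Lemma grid_colors_leq_top_class : #|grid_colors (bgrid f)| <= t + #|top_class f|.
Proof.
pose high := [set (inord (n + r) : 'I_(n + t).+1) | r : 'I_t].
pose low := [set (inord (val i) : 'I_(n + t).+1) | i in top_class f].
have sub : grid_colors (bgrid f) \subset high :|: low.
  apply/subsetP => _ /imset2P[r c _ _ ->]; rewrite inE.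
  have [lt_n | ge_n] := ltnP (f (bvert r c)) n.
    apply/orP; right; apply/imsetP; exists (Ordinal lt_n); first exact: bvert_color_low.
    by rewrite inord_val.
  have lt_t : val (f (bvert r c)) - n < t.
    have neq_max := bvert_color_neq_max r c; have lt_k := ltn_ord (f (bvert r c)).
    by move: neq_max lt_k ge_n; rewrite -val_eqE /=; lia.
  by apply/orP; left; apply/imsetP; exists (Ordinal lt_t); rewrite //= subnKC // inord_val.
apply: leq_trans (subset_leq_card sub) _; apply: leq_trans (leq_card_setU _ _) _.
by apply: leq_add; apply: leq_trans (leq_imset_card _ _) _; rewrite ?card_ord.
Qed.

End ClassesColored.

Lemma alpha_rows_repeat : 1 < t -> [forall r, row_repeats (bgrid (alpha n t)) r].
Proof.
move=> t_gt1; apply/forallP => r; apply/existsP; exists (Ordinal (ltnW t_gt1)).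
by apply/existsP; exists (Ordinal t_gt1); rewrite /bgrid !ffunE eqxx andbT -val_eqE.
Qed.

Lemma beta_row_injective r : ~~ row_repeats (bgrid (beta n t)) r.
Proof.
apply/row_repeatsPn => c c'; rewrite /bgrid !ffunE /= => /(congr1 val).
by rewrite /= !inordK ?ltnS ?leq_add2l 1?ltnW // => /addnI /val_inj.
Qed.

Lemma recolor_rows_repeat (f g : col) : recolor_adj f g ->
  [forall r, row_repeats (bgrid f) r] -> t - 1 <= #|[set r | row_repeats (bgrid g) r]|.
Proof.
move=> /cards1P[v fg_v] /forallP rows_f.
have same w : w != v -> f w = g w.
  by move=> wv; apply/eqP; apply: contraNT wv => fgw; rewrite -in_set1 -fg_v inE.
suff [A [A_big A_off]] : exists A : {set 'I_t},
    t - 1 <= #|A| /\ forall r c, r \in A -> bvert r c != v.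
  apply: leq_trans A_big (subset_leq_card _); apply/subsetP => r rA; rewrite inE.
  by rewrite -(@eq_row_repeats _ _ (bgrid f)) ?rows_f // => c; apply/same/A_off.
case: v {fg_v same} => [[i | [r' c']] | [m x]].
- by exists setT; rewrite cardsT card_ord leq_subr.
- exists [set~ r']; rewrite cardsC1 card_ord subn1; split=> // r c.
  by rewrite !inE; apply: contra => /eqP[->].
- by exists setT; rewrite cardsT card_ord leq_subr.
Qed.

Lemma reconf_walk_classes s : 1 < t -> path (@recolor_adj n t) (alpha n t) s ->
  last (alpha n t) s = beta n t -> size s <= ell ->
  {in alpha n t :: s, forall f : col, forall m, exists x, f (cvert m x) = inord m}.
Proof.
move=> t_gt1 walk walk_end walk_size f f_in m.
set D := changed (alpha n t) s.
set b := bvert (Ordinal (ltnW t_gt1)) (Ordinal t_gt1).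
have bD : b \in D.
  apply: contraT => bnD; have := changed_fixed bnD (mem_last _ s).
  by rewrite walk_end !ffunE /= => /(congr1 val); rewrite /= !inordK; lia.
have /subsetPn[_ /imsetP[x _ ->] cD] : ~~ ([set cvert m x | x : 'I_ell] \subset D).
  apply/negP => CD; have bD1 : [set b] \subset D by rewrite sub1set.
  have := subset_leq_card (setUSS bD1 CD).
  rewrite setUid cardsU1 card_imset; last by move=> x y [].
  have -> : b \notin [set cvert m x | x : 'I_ell] by apply/imsetP => -[].
  rewrite card_ord /= add1n => /leq_trans/(_ (card_changed walk)).
  by rewrite ltnNge walk_size.
by exists x; rewrite (changed_fixed cD f_in) ffunE.
Qed.

End Construction.

Theorem mainTheorem4 (n t : nat) (e : rel 'I_n)
  (e_sym : symmetric e) (e_irr : irreflexive e) (ht : 1 <= t) :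
  (exists s : seq (coloring n t),
      reconf_path e s /\ size s <= 2 * t + 2 * t ^ 2) ->
  exists S : {set 'I_n}, independent e S /\ t - 1 <= #|S|.
Proof.
move=> [s [/and3P[all_proper walk /eqP walk_end] walk_size]].
have [t_le1 | t_gt1] := leqP t 1.
  by exists set0; split; [apply/forallP => i; rewrite inE | rewrite cards0; lia].
have [|y ys /andP[y_rows y_many_rows]] :=
  path_exit (@recolor_rows_repeat n t) (alpha_rows_repeat n t_gt1) _ walk.
  by rewrite walk_end; apply/forallPn; exists (Ordinal (ltnW t_gt1)); apply: beta_row_injective.
have y_in : y \in alpha n t :: s by rewrite inE ys orbT.
have y_proper : Defs.proper e y := allP all_proper y y_in.
have := grid_colors_lower_bound (bgrid_proper y_proper) y_rows y_many_rows.
have y_classes := reconf_walk_classes t_gt1 walk walk_end walk_size y_in.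
have := grid_colors_leq_top_class y_proper y_classes.
by exists (top_class y); split; [exact: top_class_independent y_proper | lia].
Qed.
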